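(* Let $\xi$ be the random potential defined in the context. There is a constant $c_0>0$ such that $\mathbb{P}$-a.s. there exists a (random) increasing sequence $(x_n)_{n\in\mathbb{N}}$ of reals tending to infinity such that for all $n$ $$\xi(x)=\mathsf{ei}\ \ \forall x\in[x_n-2c_0\ln n,\,x_n],\qquad \xi(x)=\mathsf{es}\ \ \forall x\in[x_n+2,\,x_n+2c_0\ln n-2],$$ and $\xi$ is non-decreasing on $[x_n-2c_0\ln n,\,x_n+2c_0\ln n-2]$. Moreover, $\mathbb{P}$-a.s., $$1\le\liminf_{n\to\infty}\frac{x_n}{n}\le\limsup_{n\to\infty}\frac{x_n}{n}\le2.$$
   Context: Fix constants $0<\mathsf{ei}<\mathsf{es}<\infty$ with $\mathsf{es}/\mathsf{ei}>2$. Let $\chi:[0,\infty)\to[0,1]$ be continuous and non-increasing with $\chi(x)=1$ for $x\le1$ and $\chi(x)=0$ for $x\ge2$, and let $\omega=(\omega^i)_{i\in\mathbb{Z}}$ be a Poisson point process on $\mathbb{R}$ with intensity $1$ on $(\Omega,\mathcal F,\mathbb P)$. Define $\xi(x):=\mathsf{ei}+(\mathsf{es}-\mathsf{ei})\sup\{\chi(|x-\omega^i|):i\in\mathbb{Z}\}$, $x\in\mathbb{R}$. *)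

From HB Require Import structures.
From mathcomp Require Import all_boot all_order all_algebra.
From mathcomp Require Import all_classical all_reals all_analysis.
Set Implicit Arguments. Unset Strict Implicit. Unset Printing Implicit Defensive.
Import Order.TTheory GRing.Theory Num.Theory.
Import numFieldNormedType.Exports.
Local Open Scope classical_set_scope.
Local Open Scope ring_scope.

(* A point configuration indexed by Z: omega w : int -> R. *)

Definition count_eq {T : Type} {R : realType} (omega : T -> int -> R)
  (w : T) (A : set R) (k : nat) : Prop :=
  exists s : seq int, uniq s /\ size s = k /\
    (forall i : int, A (omega w i) <-> i \in s).

Definition bounded_real_set {R : realType} (A : set R) : Prop :=
  exists r : R, forall x, A x -> `|x| <= r.

(* Poisson point process on R with intensity 1 (Lebesgue measure):
   each point is a random variable, and for pairwise disjoint bounded Borel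
   sets A_0, ..., A_{m-1} the counts N(A_j) are independent Poisson variables
   with parameters Leb(A_j) (joint law given by the product formula). *)
Definition poisson_point_process {d : measure_display} {T : measurableType d}
  {R : realType} (P : probability T R) (omega : T -> int -> R) : Prop :=
  (forall i : int, measurable_fun setT (fun w => omega w i)) /\
  (forall (m : nat) (A : nat -> set R) (k : nat -> nat),
     (forall j, (j < m)%N -> measurable (A j) /\ bounded_real_set (A j)) ->
     (forall j j', (j < m)%N -> (j' < m)%N -> j <> j' -> A j `&` A j' = set0) ->
     P (\bigcap_(j in [set j | (j < m)%N]) [set w | count_eq omega w (A j) (k j)])
     = (\prod_(j < m)
          (let l := fine (lebesgue_measure (A j)) in
           expR (- l) * l ^+ (k j) / (k j)`!%:R)%:E)%E).

Definition xi {T : Type} {R : realType} (ei es : R) (chi : R -> R)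
  (omega : T -> int -> R) (w : T) (x : R) : R :=
  ei + (es - ei) * sup [set chi `|x - omega w i| | i in [set: int]].

From HB Require Import structures.
From mathcomp Require Import all_boot all_order all_algebra.
From mathcomp Require Import all_classical all_reals all_analysis.
From mathcomp Require Import zify ring lra.
Import Order.TTheory GRing.Theory Num.Theory.
Import numFieldNormedType.Exports.
Local Open Scope classical_set_scope.
Local Open Scope ring_scope.

(* A point of the configuration within distance 1 of x forces xi x = es, and no
   point within distance 2 forces xi x = ei.  Call j a pattern of size K when
   [j - K - 2, j + 3) contains no point while [j + 3, j + 7/2) and each unit cell
   [j + 4 + t, j + 5 + t), t < K, contain one: then around every x in
   [j + 1/2, j + 1], xi equals ei on [x - K, x], equals es on [x + 2, x + K - 2] and
   is non-decreasing in between.  A pattern of size K has probability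
   q = e^(-(2K + 11/2)) / 2.  At scale m take K = floor (log_(2^16) m) + 1, which
   exceeds ln m / (16 ln 2), and the M = m / (2K + 6) pairwise far apart candidate
   positions in [m, 2m): the Poisson counts of disjoint cells being independent, all
   of them fail with probability (1 - q)^M <= exp (- M q) = O(m^-2), as M q grows
   like sqrt m.  By Borel-Cantelli, almost surely every large m has a pattern in
   [m, 2m), and x_m := (least such j) + 1 - 1/(m + 2) works with c0 = 1/(32 ln 2). *)

Section TailBounds.
Context {R : realType}.

Lemma expRN_le_inv4 {y : R} : 0 < y -> expR (- y) <= 24 / y ^+ 4.
Proof.
move=> y_gt0; have := expR_ge1Dxn 3 (ltW y_gt0).
rewrite (_ : 4`!%:R = 24 :> R) // expRN -[24 / _]invf_div.
rewrite lef_pV2 ?posrE ?expR_gt0 ?divr_gt0 ?exprn_gt0 //.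
lra.
Qed.

Lemma pow1B_le_expR n (q : R) : q <= 1 -> (1 - q) ^+ n <= expR (- (n%:R * q)).
Proof.
move=> q_le1; rewrite -mulrN expRM_natl.
apply: lerXn2r; rewrite ?nnegrE ?subr_ge0 ?expR_ge0 //.
by have := expR_ge1Dx (- q); lra.
Qed.

(* X is the scale of the windows, M their number and q >= 1 / (c X) the probability
   of a pattern in each of them. *)
Lemma sqr_le_pow4_expected_count {m X M q c : R} : 1 <= X -> X ^+ 4 <= m -> 0 <= M ->
  m <= 16 * X * M -> 1 <= c * X * q -> m ^+ 2 <= (16 * c) ^+ 4 * (M * q) ^+ 4.
Proof.
move=> X_ge1 X4_le M_ge0 m_le q_ge.
have m_gt0 : 0 < m by have := exprn_ege1 4 X_ge1; lra.
have XM_ge0 : 0 <= 16 * X * M by nra.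
have m_le' : m <= 16 * c * X ^+ 2 * (M * q) by nra.
have {m_le'} m_le : m <= (16 * c) ^+ 2 * (M * q) ^+ 2.
  set k := (16 * c) ^+ 2 * (M * q) ^+ 2.
  have m2_le : m ^+ 2 <= k * X ^+ 4.
    rewrite (_ : k * X ^+ 4 = (16 * c * X ^+ 2 * (M * q)) ^+ 2); last first.
      by rewrite /k; ring.
    by rewrite lerXn2r ?nnegrE; lra.
  have k_ge0 : 0 <= k by rewrite /k mulr_ge0 ?exprn_even_ge0.
  have kX4_le : k * X ^+ 4 <= k * m by rewrite ler_wpM2l.
  by rewrite -(ler_pM2r m_gt0); lra.
have : m ^+ 2 <= ((16 * c) ^+ 2 * (M * q) ^+ 2) ^+ 2 by rewrite lerXn2r ?nnegrE; lra.
by rewrite exprMn -!exprM.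
Qed.

Lemma sum_inv_sqr_le2 N : \sum_(0 <= n < N) (n.+1%:R ^+ 2)^-1 <= 2 :> R.
Proof.
pose f k : R := - 2 / k.+1%:R.
have term_le n : (n.+1%:R ^+ 2)^-1 <= f n.+1 - f n.
  rewrite /f -[n.+2]addn2 -[n.+1]addn1 !natrD; set x : R := n%:R.
  have x_ge0 : 0 <= x by [].
  rewrite -subr_ge0 (_ : _ - _ = x / ((x + 1) ^+ 2 * (x + 2))); last first.
    by field; apply/andP; split; apply: lt0r_neq0; lra.
  by rewrite divr_ge0 // mulr_ge0 ?exprn_ge0; lra.
apply: le_trans (ler_sum _ (fun n _ => term_le n)) _.
by rewrite telescope_sumr // /f divr1 !mulNr opprK addrC gerBl divr_ge0.
Qed.

Lemma nneseries_inv_sqr_lty (C : R) : 0 <= C ->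
  (\sum_(n <oo) (C / n.+1%:R ^+ 2)%:E < +oo)%E.
Proof.
move=> C_ge0; apply: le_lt_trans (ltry (C * 2)).
apply: lime_le; first by apply: is_cvg_nneseries => n _ _; rewrite lee_fin divr_ge0.
apply: nearW => N; rewrite sumEFin lee_fin.
under eq_bigr do rewrite mulrC.
by rewrite -mulr_suml mulrC ler_wpM2l // sum_inv_sqr_le2.
Qed.

End TailBounds.

Definition pattern_prob {R : realType} (K : nat) : R := expR (- 2^-1) ^+ (4 * K + 11) / 2.

Definition pattern_size (m : nat) : nat := (trunc_log (2 ^ 16) m).+1.
Definition window_spacing (m : nat) : nat := 2 * pattern_size m + 6.
Definition window_count (m : nat) : nat := m %/ window_spacing m.
Definition window_scale (m : nat) : nat := 2 ^ (4 * trunc_log (2 ^ 16) m).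

Section WindowBound.
Context {R : realType}.

Lemma pattern_prob_gt0 K : 0 < pattern_prob K :> R.
Proof. by rewrite divr_gt0 // exprn_gt0 // expR_gt0. Qed.

Lemma pattern_prob_le1 K : pattern_prob K <= 1 :> R.
Proof.
have : expR (- 2^-1) ^+ (4 * K + 11) <= 1 :> R.
  by rewrite exprn_ile1 ?expR_ge0 // expR_le1 oppr_le0 invr_ge0.
by rewrite ler_pdivrMr //; lra.
Qed.

Lemma pattern_prob_ge K : (2 ^+ (4 * K + 12))^-1 <= pattern_prob K :> R.
Proof.
have half_le : 2^-1 <= expR (- 2^-1) :> R by have := expR_ge1Dx (- 2^-1 : R); lra.
rewrite /pattern_prob addnS exprSr invfM -exprVn ler_wpM2r //.
by rewrite lerXn2r ?nnegrE ?expR_ge0.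
Qed.

Lemma window_scale_pow4_le m : (0 < m)%N -> (window_scale m ^ 4 <= m)%N.
Proof.
move=> m_gt0; rewrite /window_scale -expnM.
rewrite (_ : (4 * _ * 4 = 16 * trunc_log (2 ^ 16) m)%N); last lia.
by rewrite expnM; exact: trunc_logP.
Qed.

Lemma window_spacing_le m : (window_spacing m <= 8 * window_scale m)%N.
Proof.
have := ltn_expl (4 * trunc_log (2 ^ 16) m) (isT : (1 < 2)%N).
by rewrite /window_spacing /window_scale /pattern_size; lia.
Qed.

Lemma window_count_ge m : (2 * window_spacing m <= m)%N ->
  (m <= 16 * window_scale m * window_count m)%N.
Proof.
have D_gt0 : (0 < window_spacing m)%N by rewrite /window_spacing addn_gt0 orbT.
have := ltn_ceil m D_gt0; have := window_spacing_le m.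
by rewrite /window_count; nia.
Qed.

Lemma window_count_small m : (0 < m)%N -> (m < 2 * window_spacing m)%N -> (m < 20)%N.
Proof.
move=> m_gt0; have := ltn_expl (16 * trunc_log (2 ^ 16) m) (isT : (1 < 2)%N).
have := trunc_logP (isT : (1 < 2 ^ 16)%N) m_gt0; rewrite -expnM.
by rewrite /window_spacing /pattern_size; lia.
Qed.

Lemma pattern_prob_size_ge m :
  1 <= 2 ^+ 16 * (window_scale m)%:R * pattern_prob (pattern_size m) :> R.
Proof.
rewrite -ler_pdivrMl ?mulr_gt0 ?ltr0n ?expn_gt0 // mulr1 /window_scale natrX -exprD.
rewrite (_ : (16 + 4 * _ = 4 * pattern_size m + 12)%N) ?pattern_prob_ge //.
by rewrite /pattern_size; lia.
Qed.

Lemma windows_fail_prob_le m :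
  (1 - pattern_prob (pattern_size m)) ^+ window_count m <= 2 ^+ 87 / m.+1%:R ^+ 2 :> R.
Proof.
case: (posnP m) => [-> | m_gt0].
  rewrite /window_count div0n expr0 mulr1n expr1n divr1.
  by apply: exprn_ege1; rewrite ler1n.
set q : R := pattern_prob (pattern_size m); set M := window_count m.
have q_le1 : q <= 1 := pattern_prob_le1 _.
have [large | small] := leqP (2 * window_spacing m) m; last first.
  have m_lt : m.+1%:R <= 20 :> R by rewrite ler_nat window_count_small.
  apply: le_trans (_ : 1 <= _).
    by rewrite exprn_ile1 ?subr_ge0 // lerBlDr lerDl ltW ?pattern_prob_gt0.
  rewrite ler_pdivlMr ?exprn_gt0 // mul1r.
  have : 2 ^+ 9 <= 2 ^+ 87 :> R by rewrite ler_eXn2l // ltr1n.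
  by have := ler0n R m.+1; nra.
have M_gt0 : (0 < M)%N by rewrite divn_gt0 ?addn_gt0 ?orbT //; lia.
have Mq_gt0 : 0 < M%:R * q by rewrite mulr_gt0 ?ltr0n ?pattern_prob_gt0.
have X_ge1 : 1 <= (window_scale m)%:R :> R by rewrite ler1n expn_gt0.
have X4_le : (window_scale m)%:R ^+ 4 <= m%:R :> R.
  by rewrite -natrX ler_nat window_scale_pow4_le.
have := window_count_ge m large; rewrite -(ler_nat R) !natrM => m_le.
have := sqr_le_pow4_expected_count X_ge1 X4_le (ler0n R M) m_le (pattern_prob_size_ge m).
rewrite (_ : (16 * 2 ^+ 16) ^+ 4 = 2 ^+ 80 :> R) -/q => [sq|]; last by ring.
apply: le_trans (pow1B_le_expR M q q_le1) _; apply: le_trans (expRN_le_inv4 Mq_gt0) _.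
rewrite ler_pdivrMr ?exprn_gt0 // mulrAC ler_pdivlMr ?exprn_gt0 //.
have m_ge1 : 1 <= m%:R :> R by rewrite ler1n.
have : (m.+1%:R ^+ 2 : R) <= 4 * m%:R ^+ 2 by rewrite -natr1; nra.
rewrite (_ : 2 ^+ 87 = 2 ^+ 80 * 128 :> R); last by ring.
nra.
Qed.

Lemma leq_pattern_size : {homo pattern_size : m n / (m <= n)%N}.
Proof. by move=> m n mn; rewrite ltnS leq_trunc_log. Qed.

Lemma ln_le_pattern_size n : (0 < n)%N -> ln n%:R / (16 * ln 2) <= (pattern_size n)%:R :> R.
Proof.
move=> n_gt0; have ln2_gt0 : 0 < ln (2 : R) by rewrite ln_gt0 // ltr1n.
have : (n < 2 ^ (16 * pattern_size n))%N by rewrite expnM; exact: trunc_log_ltn.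
move: (pattern_size n) => p n_lt.
have : ln n%:R < ln (2 ^+ (16 * p) : R).
  by rewrite ltr_ln ?posrE ?ltr0n ?exprn_gt0 // -natrX ltr_nat.
rewrite lnXn // -[ln 2 *+ _]mulr_natr natrM => ln_lt.
by rewrite ler_pdivrMr ?mulr_gt0 //; lra.
Qed.

End WindowBound.

Definition pattern {R : realType} (c : int -> R) (j K : nat) : Prop :=
  [/\ forall i, c i < j%:R - K%:R - 2 \/ j%:R + 3 <= c i,
      exists i, j%:R + 3 <= c i < j%:R + 3 + 2^-1
    & forall t, (t < K)%N -> exists i, j%:R + 4 + t%:R <= c i < j%:R + 5 + t%:R].

Lemma pattern_le {R : realType} {c : int -> R} {j K K'} :
  (K' <= K)%N -> pattern c j K -> pattern c j K'.
Proof.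
move=> K'K [gap near_pt cells]; split => // [i | t tK']; last exact/cells/(leq_trans tK').
have : (K'%:R : R) <= K%:R by rewrite ler_nat.
by case: (gap i) => ?; [left | right]; lra.
Qed.

Lemma increasing_witnesses (Q : nat -> nat -> Prop) {N} :
  (forall m j, Q m.+1 j -> Q m j) ->
  (forall m, (N <= m)%N -> exists2 j, (m <= j < 2 * m)%N & Q m j) ->
  exists t : nat -> nat, [/\ {homo t : m n / (m <= n)%N},
    forall m, (m <= t m)%N /\ Q m (t m) & forall m, (N <= m)%N -> (t m < 2 * m)%N].
Proof.
move=> Q_step Q_win.
have Q_anti j m n : (m <= n)%N -> Q n j -> Q m j.
  move=> /subnKC <-; elim: (n - m)%N => [|k IH]; rewrite ?addn0 // addnS.
  by move=> /Q_step; exact: IH.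
have ex m : exists j, (m <= j)%N && `[< Q m j >].
  have [j /andP[mj _] Qj] := Q_win (maxn N m) (leq_maxl _ _).
  exists j; rewrite (leq_trans (leq_maxr N m) mj); apply/asboolP.
  exact: Q_anti (leq_maxr N m) Qj.
pose t m := ex_minn (ex m).
have tP m : (m <= t m)%N /\ Q m (t m).
  by rewrite /t; case: ex_minnP => j /andP[mj /asboolP].
have t_min m j : (m <= j)%N -> Q m j -> (t m <= j)%N.
  by move=> mj Qj; rewrite /t; case: ex_minnP => k _; apply; rewrite mj; apply/asboolP.
exists t; split => // [|m Nm].
  apply: homo_leq => [//|n m p|m]; first exact: leq_trans.
  by have [/ltnW m_le Q_m] := tP m.+1; apply: t_min m_le (Q_step _ _ Q_m).
have [j /andP[mj j_lt] Qj] := Q_win m Nm.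
exact: leq_ltn_trans (t_min m j mj Qj) j_lt.
Qed.

Lemma ratio_liminf_limsup_bounds {R : realType} (u : R^nat) N :
  (forall n, (N <= n)%N -> n%:R <= u n <= 2 * n%:R) ->
  (1%:E <= limn_einf (fun n => (u n / n%:R)%:E))%E /\
  (limn_esup (fun n => (u n / n%:R)%:E) <= 2%:E)%E.
Proof.
move=> u_bounds; have ratio n : (N < n)%N -> 1 <= u n / n%:R <= 2.
  move=> Nn; have n_gt0 : (0 : R) < n%:R by rewrite ltr0n (leq_ltn_trans _ Nn).
  by rewrite ler_pdivlMr // ler_pdivrMr // mul1r; apply: u_bounds; exact: ltnW.
split.
  rewrite limn_einf_lim; apply: lime_ge; first exact: is_cvg_einfs.
  exists N.+1 => // n /= Nn; apply: le_ereal_inf_tmp => _ [k /= nk <-].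
  by rewrite lee_fin; case/andP: (ratio k (leq_trans Nn nk)).
rewrite limn_esup_lim; apply: lime_le; first exact: is_cvg_esups.
exists N.+1 => // n /= Nn; apply: ge_ereal_sup => _ [k /= nk <-].
by rewrite lee_fin; case/andP: (ratio k (leq_trans Nn nk)).
Qed.

Section Potential.
Variables (R : realType) (ei es : R) (chi : R -> R).
Hypotheses (ei_lt_es : ei < es)
  (chi_ge0_le1 : forall x, 0 <= x -> 0 <= chi x <= 1)
  (chi_nonincr : forall x y, 0 <= x -> x <= y -> chi y <= chi x)
  (chi_eq1 : forall x, 0 <= x -> x <= 1 -> chi x = 1)
  (chi_eq0 : forall x, 2 <= x -> chi x = 0).
Variables (T : Type) (omega : T -> int -> R) (w : T).

Local Notation V := (xi ei es chi omega w).
Local Notation chis x := [set chi `|x - omega w i| | i in [set: int]].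

Lemma chi_dist_ge0 x i : 0 <= chi `|x - omega w i|.
Proof. by case/andP: (@chi_ge0_le1 _ (normr_ge0 (x - omega w i))). Qed.

Lemma chi_dist_le1 x i : chi `|x - omega w i| <= 1.
Proof. by case/andP: (@chi_ge0_le1 _ (normr_ge0 (x - omega w i))). Qed.

Lemma chis_ub x : has_ubound (chis x).
Proof. by exists 1 => _ [i _ <-]; exact: chi_dist_le1. Qed.

Lemma chis_neq0 x : chis x !=set0.
Proof. by exists (chi `|x - omega w 0|), 0. Qed.

Lemma sup_chis_le1 x : sup (chis x) <= 1.
Proof. by apply: sup_le_ub; [exact: chis_neq0 | move=> _ [i _ <-]; exact: chi_dist_le1]. Qed.

Lemma xi_le_es x : V x <= es.
Proof.
rewrite /xi -lerBrDl; apply: ler_piMr; [by rewrite subr_ge0 ltW | exact: sup_chis_le1].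
Qed.

Lemma xi_eq_ei x : (forall i, 2 <= `|x - omega w i|) -> V x = ei.
Proof.
move=> far; rewrite /xi (_ : chis x = [set 0]) ?sup1 ?mulr0 ?addr0 //.
apply/seteqP; split => [_ [i _ <-] | _ ->] /=; first by rewrite chi_eq0.
by exists 0; rewrite // chi_eq0.
Qed.

Lemma xi_eq_es x i : `|x - omega w i| <= 1 -> V x = es.
Proof.
move=> near_i; rewrite /xi (_ : sup (chis x) = 1) ?mulr1 ?subrKC //.
apply/eqP; rewrite eq_le sup_chis_le1 /=.
rewrite -(@chi_eq1 _ (normr_ge0 _) near_i).
by apply: ub_le_sup; [exact: chis_ub | exists i].
Qed.

Lemma le_xi x y : (forall i, chi `|x - omega w i| <= chi `|y - omega w i|) -> V x <= V y.
Proof.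
move=> le_chi; rewrite /xi lerD2l; apply: ler_wpM2l; first by rewrite subr_ge0 ltW.
apply: sup_le_ub; first exact: chis_neq0.
move=> _ [i _ <-]; apply: le_trans (le_chi i) _.
by apply: ub_le_sup; [exact: chis_ub | exists i].
Qed.

Section PatternShape.
Context {j K : nat} {x L : R}.
Hypothesis pat : pattern (omega w) j K.

Lemma pattern_xi_ei (y : R) : j%:R + 2^-1 <= x <= j%:R + 1 -> L <= K%:R ->
  x - L <= y <= x -> V y = ei.
Proof.
move=> /andP[x_ge x_le] L_le_K /andP[y_ge y_le]; apply: xi_eq_ei => i; have [gap _ _] := pat.
by rewrite ler_normr; case: (gap i) => ci; apply/orP; [left | right]; lra.
Qed.

Lemma pattern_xi_es (y : R) : j%:R + 2^-1 <= x <= j%:R + 1 -> L <= K%:R ->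
  x + 2 <= y <= x + L - 2 -> V y = es.
Proof.
move=> /andP[x_ge x_le] L_le_K /andP[y_ge y_le].
have [_ [p /andP[p_ge p_le]] cells] := pat.
have [y_lt | y_ge4] := ltP y (j%:R + 4).
  by apply: (@xi_eq_es _ p); rewrite ler_norml; apply/andP; split; lra.
have y0 : 0 <= y - j%:R - 4 by lra.
have /andP[t_le t_gt] := truncn_itv y0; set t := Num.Def.trunc _ in t_le t_gt.
have tK : (t < K)%N by rewrite -(ltr_nat R); lra.
have [q /andP[q_ge q_le]] := cells t tK.
rewrite -natr1 in t_gt.
by apply: (@xi_eq_es _ q); rewrite ler_norml; apply/andP; split; lra.
Qed.

Lemma pattern_xi_mono (y z : R) : j%:R + 2^-1 <= x <= j%:R + 1 -> L <= K%:R ->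
  x - L <= y -> y <= z -> z <= x + L - 2 -> V y <= V z.
Proof.
move=> hx L_le_K y_ge yz z_le; have [z_ge | z_lt] := leP (x + 2) z.
  by rewrite (@pattern_xi_es z) ?z_ge ?z_le // xi_le_es.
case/andP: hx => x_ge x_le; apply: le_xi => i; have [gap _ _] := pat.
case: (gap i) => ci.
  by rewrite chi_eq0 ?chi_dist_ge0 // ler_normr; apply/orP; left; lra.
rewrite (distrC y) (distrC z) !ger0_norm; try lra.
by apply: chi_nonincr; lra.
Qed.

End PatternShape.

Lemma pattern_sequence N :
  (forall m, (N <= m)%N -> exists2 j, (m <= j < 2 * m)%N & pattern (omega w) j (pattern_size m)) ->
  exists xs : nat -> R,
      (forall n m, (n < m)%N -> xs n < xs m) /\
      xs @ \oo --> +oo /\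
      (forall n : nat, (0 < n)%N ->
         (forall x, xs n - 2 * (32 * ln 2)^-1 * ln n%:R <= x <= xs n -> V x = ei) /\
         (forall x, xs n + 2 <= x <= xs n + 2 * (32 * ln 2)^-1 * ln n%:R - 2 -> V x = es) /\
         (forall x y, xs n - 2 * (32 * ln 2)^-1 * ln n%:R <= x -> x <= y ->
            y <= xs n + 2 * (32 * ln 2)^-1 * ln n%:R - 2 -> V x <= V y)) /\
      (1%:E <= limn_einf (fun n => (xs n / n%:R)%:E))%E /\
      (limn_einf (fun n => (xs n / n%:R)%:E) <= limn_esup (fun n => (xs n / n%:R)%:E))%E /\
      (limn_esup (fun n => (xs n / n%:R)%:E) <= 2%:E)%E.
Proof.
move=> win.
have [t [t_homo tP t_lt]] :=
  increasing_witnesses (fun m j => pattern (omega w) j (pattern_size m))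
    (fun m j => pattern_le (leq_pattern_size _ _ (leqnSn m))) win.
(* The shift by 1/(m + 2) makes xs strictly increasing although t is only
   non-decreasing. *)
pose xs m : R := (t m)%:R + 1 - (m.+2%:R)^-1.
have inv_lt m : (m.+3%:R : R)^-1 < (m.+2%:R)^-1 by rewrite ltf_pV2 ?posrE ?ltr0n // ltr_nat.
have xs_bounds m : (t m)%:R + 2^-1 <= xs m <= (t m)%:R + 1.
  have inv_gt0 : 0 < (m.+2%:R : R)^-1 by rewrite invr_gt0 ltr0n.
  have : (m.+2%:R : R)^-1 <= 2^-1 by rewrite lef_pV2 ?posrE ?ltr0n // ler_nat.
  by rewrite /xs; move: (_^-1) inv_gt0 => i i_gt0 i_le; apply/andP; split; lra.
have ge_xs m : m%:R <= xs m.
  by have := (tP m).1; rewrite -(ler_nat R) => m_le; case/andP: (xs_bounds m); lra.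
exists xs; split.
  apply: (@homo_ltn _ xs <%R) => [y x z|m]; first exact: lt_trans.
  have := t_homo _ _ (leqnSn m); rewrite -(ler_nat R) /xs => t_le.
  by have := inv_lt m; move: (_^-1) (_^-1) => a b; lra.
split; first by apply: (@ger_cvgy _ _ _ _ (fun n : nat => n%:R)); [exact: nearW | exact: cvgr_idn].
split.
  move=> n n_gt0; have [_ Pn] := tP n; have hx := xs_bounds n.
  have hL : 2 * (32 * ln 2)^-1 * ln n%:R <= (pattern_size n)%:R :> R.
    have ln2_gt0 : 0 < ln (2 : R) by rewrite ln_gt0 // ltr1n.
    rewrite (_ : 2 * _ * _ = ln n%:R / (16 * ln 2)) ?ln_le_pattern_size //.
    by field; rewrite gt_eqF.
  split; first by move=> y; exact: pattern_xi_ei Pn y hx hL.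
  split; first by move=> y; exact: pattern_xi_es Pn y hx hL.
  by move=> y z; exact: pattern_xi_mono Pn y z hx hL.
have [ratio_ge ratio_le] : (1%:E <= limn_einf (fun n => (xs n / n%:R)%:E))%E /\
    (limn_esup (fun n => (xs n / n%:R)%:E) <= 2%:E)%E.
  apply: (@ratio_liminf_limsup_bounds R xs N) => n Nn; rewrite ge_xs /=.
  have := t_lt n Nn; rewrite -(ler_nat R) natrM -natr1 => t_lt'.
  by case/andP: (xs_bounds n); lra.
by split => //; split => //; exact: limn_einf_sup.
Qed.

End Potential.

Section Cells.
Context {R : realType}.

Definition cells_disjoint : rel (set R * nat) := fun p q => [disjoint p.1 & q.1].

Definition admissible_cells (l : seq (set R * nat)) : Prop :=
  {in l, forall p, measurable p.1 /\ bounded_real_set p.1} /\ pairwise cells_disjoint l.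

Definition cell_prob (p : set R * nat) : R :=
  let l := fine (lebesgue_measure p.1) in expR (- l) * l ^+ p.2 / p.2`!%:R.

Definition cylinder_prob (l : seq (set R * nat)) : R := \prod_(p <- l) cell_prob p.

Lemma cylinder_prob_cat l1 l2 : cylinder_prob (l1 ++ l2) = cylinder_prob l1 * cylinder_prob l2.
Proof. by rewrite /cylinder_prob big_cat. Qed.

Lemma disjoint_itv (a b c e : R) : b <= c -> [disjoint `[a, b[ & `[c, e[]%classic.
Proof.
move=> bc; apply/disj_set2P/seteqP; split => // x [] /=.
by rewrite !in_itv /= => /andP[_ xb] /andP[cx _]; lra.
Qed.

Lemma bounded_itv (a b : R) : bounded_real_set `[a, b[%classic.
Proof.
exists (`|a| + `|b|) => x /=; rewrite in_itv /= ler_norml => /andP[ax xb].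
have := ler_norm (- a); have := ler_norm b; rewrite normrN.
by have := normr_ge0 a; have := normr_ge0 b; lra.
Qed.

Lemma cell_prob_itv (a b : R) k : a < b ->
  cell_prob (`[a, b[%classic, k) = expR (- (b - a)) * (b - a) ^+ k / k`!%:R.
Proof. by move=> ab; rewrite /cell_prob /= lebesgue_measure_itv /= lte_fin ab. Qed.

End Cells.

Definition pattern_cells {R : realType} (j K : nat) : seq (set R * nat) :=
  [:: (`[j%:R - K%:R - 2, j%:R + 3[%classic, 0%N),
      (`[j%:R + 3, j%:R + 3 + 2^-1[%classic, 1%N)
    & [seq (`[j%:R + 4 + t%:R, j%:R + 5 + t%:R[%classic, 1%N) | t <- iota 0 K]].

Definition pattern_region {R : realType} (j K : nat) : set R :=
  `[j%:R - K%:R - 2, j%:R + K%:R + 4[%classic.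

Definition apart (K : nat) : rel nat :=
  fun j j' => (j + (2 * K + 6) <= j')%N || (j' + (2 * K + 6) <= j)%N.

Section PatternCells.
Context {R : realType}.
Variables (j K : nat).

Lemma mem_pattern_cells (p : set R * nat) : p \in pattern_cells j K ->
  [\/ p = (`[j%:R - K%:R - 2, j%:R + 3[%classic, 0%N),
      p = (`[j%:R + 3, j%:R + 3 + 2^-1[%classic, 1%N)
    | exists2 t, (t < K)%N & p = (`[j%:R + 4 + t%:R, j%:R + 5 + t%:R[%classic, 1%N)].
Proof.
rewrite !inE => /or3P[/eqP -> | /eqP -> | /mapP[t]]; [exact: Or31 | exact: Or32 |].
by rewrite mem_iota add0n => /andP[_ tK] ->; apply: Or33; exists t.
Qed.

Lemma pattern_cells_admissible : admissible_cells (pattern_cells j K : seq (set R * nat)).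
Proof.
have K_ge0 : (0 : R) <= K%:R by [].
split.
  move=> p /mem_pattern_cells[-> | -> | [t _ ->]];
    by split; [exact: measurable_itv | exact: bounded_itv].
rewrite /pattern_cells !pairwise_cons pairwise_map; apply/and3P; split.
- apply/andP; split; first by apply: disjoint_itv; lra.
  apply/allP => _ /mapP[t _ ->]; apply: disjoint_itv.
  by have : (0 : R) <= t%:R by []; lra.
- apply/allP => _ /mapP[t _ ->]; apply: disjoint_itv.
  by have : (0 : R) <= t%:R by []; lra.
- apply: (@sub_pairwise _ ltn).
    move=> t t' tt'; apply: disjoint_itv.
    have : t.+1%:R <= t'%:R :> R by rewrite ler_nat.
    by rewrite -natr1; lra.
  by rewrite -sorted_pairwise ?iota_ltn_sorted //; exact: ltn_trans.
Qed.

Lemma pattern_cells_sub (p : set R * nat) : p \in pattern_cells j K ->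
  p.1 `<=` pattern_region j K.
Proof.
have K_ge0 : (0 : R) <= K%:R by [].
move=> /mem_pattern_cells[-> | -> | [t tK ->]] x /=;
  rewrite /pattern_region /= !in_itv /= => /andP[x_ge x_lt].
- by apply/andP; split; lra.
- by apply/andP; split; lra.
have : t.+1%:R <= K%:R :> R by rewrite ler_nat.
by have : (0 : R) <= t%:R by []; rewrite -natr1 => *; apply/andP; split; lra.
Qed.

Lemma pattern_cells_prob : cylinder_prob (pattern_cells j K) = pattern_prob K :> R.
Proof.
have K_ge0 : (0 : R) <= K%:R by [].
rewrite /cylinder_prob /pattern_cells !big_cons big_map.
rewrite (eq_bigr (fun=> expR (- 2^-1) ^+ 2)) => [|t _]; last first.
  rewrite cell_prob_itv; last lra.
  rewrite (_ : _ - _ = 1); last lra.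
  by rewrite -expRM_natl expr1 divr1 mulr1; congr expR; lra.
rewrite (_ : iota 0 K = index_iota 0 K) ?prodr_const_nat; last by rewrite /index_iota subn0.
rewrite subn0 -exprM !cell_prob_itv; try lra.
rewrite (_ : j%:R + 3 - (j%:R - K%:R - 2) = (2 * K + 10)%:R * 2^-1); last first.
  by rewrite natrD natrM; lra.
rewrite (_ : j%:R + 3 + 2^-1 - (j%:R + 3) = 2^-1); last lra.
rewrite -mulrN expRM_natl /pattern_prob (_ : (4 * K + 11 = 2 * K + 10 + 1 + 2 * K)%N); last lia.
by rewrite !exprD /= !divr1 ?mulr1; ring.
Qed.

End PatternCells.

Lemma apart_region_disjoint {R : realType} {K j j'} : apart K j j' ->
  [disjoint pattern_region j K & pattern_region j' K :> set R]%classic.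
Proof.
rewrite /apart /pattern_region => /orP[] sep.
  by apply: disjoint_itv; move: sep; rewrite -(ler_nat R) !natrD; lra.
by rewrite disj_set_sym; apply: disjoint_itv; move: sep; rewrite -(ler_nat R) !natrD; lra.
Qed.

Lemma admissible_pattern_cells_cat {R : realType} j K (G : seq (set R * nat)) :
  admissible_cells G -> {in G, forall p, [disjoint p.1 & pattern_region j K]%classic} ->
  admissible_cells (pattern_cells j K ++ G).
Proof.
move=> [G_ok G_disj] G_far; have [pat_ok pat_disj] := pattern_cells_admissible (R:=R) j K.
split; first by move=> p; rewrite mem_cat => /orP[/pat_ok | /G_ok].
rewrite pairwise_cat pat_disj G_disj !andbT; apply/allrelP => p q pj qG.
apply/disj_setPS => x [px qx]; have /disj_setPS := G_far q qG.
by apply; split => //; exact: pattern_cells_sub pj _ px.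
Qed.

Lemma pattern_cells_far {R : realType} j K (js : seq nat) : {in js, forall j', apart K j j'} ->
  {in pattern_cells j K, forall p : set R * nat,
    {in js, forall j', [disjoint p.1 & pattern_region j' K]%classic}}.
Proof.
move=> j_apart p pj j' j'js; apply/disj_setPS => x [px rx].
have /disj_setPS := apart_region_disjoint (R:=R) (j_apart j' j'js).
by apply; split => //; exact: pattern_cells_sub pj _ px.
Qed.

Section Cylinders.
Context {R : realType} {d : measure_display} {T : measurableType d}.
Variable omega : T -> int -> R.

Definition cylinder (l : seq (set R * nat)) : set T :=
  \bigcap_(p in [set` l]) [set w | count_eq omega w p.1 p.2].

Lemma cylinder_cat l1 l2 : cylinder (l1 ++ l2) = cylinder l1 `&` cylinder l2.
Proof.
rewrite /cylinder -bigcap_setU; congr (\bigcap_(_ in _) _).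
by apply/seteqP; split => p /=; rewrite mem_cat => /orP.
Qed.

Lemma count_eq0 {w A} : count_eq omega w A 0 -> forall i, ~ A (omega w i).
Proof. by move=> [s [_ [/size0nil -> sP]]] i /sP. Qed.

Lemma count_eq1 {w A} : count_eq omega w A 1 -> exists i, A (omega w i).
Proof. by move=> [[|i [|? ?]] [_ [//= _ sP]]]; exists i; apply/sP; rewrite inE. Qed.

Lemma cylinder_pattern j K : cylinder (pattern_cells j K) `<=` [set w | pattern (omega w) j K].
Proof.
move=> w cyl; have cell p : p \in pattern_cells j K -> count_eq omega w p.1 p.2 by exact: cyl.
split.
- move=> i; have := count_eq0 (cell _ (mem_head _ _)) i; rewrite /= in_itv /=.
  case: (ltP (omega w i) (j%:R - K%:R - 2)) => [|a_le nin]; first by left.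
  by right; rewrite leNgt; apply/negP => lt; apply: nin; apply/andP.
- have mem2 : (`[j%:R + 3, j%:R + 3 + 2^-1[%classic : set R, 1%N) \in pattern_cells j K.
    by rewrite /pattern_cells !inE eqxx orbT.
  by have [i] := count_eq1 (cell _ mem2); rewrite /= in_itv /=; exists i.
- move=> t tK.
  have memt : (`[j%:R + 4 + t%:R, j%:R + 5 + t%:R[%classic : set R, 1%N) \in pattern_cells j K.
    by rewrite /pattern_cells !inE; apply/or3P/Or33/mapP; exists t; rewrite ?mem_iota.
  by have [i] := count_eq1 (cell _ memt); rewrite /= in_itv /=; exists i.
Qed.

End Cylinders.

Section CylinderProbability.
Context {R : realType} {d : measure_display} {T : measurableType d}.
Variables (P : probability T R) (omega : T -> int -> R).
Hypothesis omega_meas : forall i, measurable_fun setT (fun w => omega w i).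

Lemma count_eq_measurable A k : measurable A -> measurable [set w | count_eq omega w A k].
Proof.
move=> mA; have mE i : measurable [set w | A (omega w i)].
  by rewrite -[X in measurable X]setTI; exact: omega_meas.
pose E (s : seq int) i := if i \in s then [set w | A (omega w i)] else ~` [set w | A (omega w i)].
have -> : [set w | count_eq omega w A k] =
    \bigcup_(s : seq int) (if uniq s && (size s == k) then ~` \bigcup_i ~` E s i else set0).
  apply/seteqP; split => w.
    move=> [s [s_uniq [s_size sP]]]; exists s => //.
    rewrite s_uniq s_size eqxx => -[i _]; apply; rewrite /E.
    by case: ifP => /= i_s; [exact/sP | move=> /sP; rewrite i_s].
  move=> [s _]; case: ifP => // /andP[s_uniq /eqP s_size] sE.
  exists s; split => //; split => // i.
  have {}sE : E s i w by apply: contrapT => nE; apply: sE; exists i.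
  by rewrite /E in sE; split => [Ai | i_s]; [case: ifP sE | rewrite i_s in sE].
apply: countable_bigcupT_measurable => [|s]; first exact: countableP.
case: ifP => _ //; apply/measurableC/countable_bigcupT_measurable => [|i]; first exact: countableP.
by apply: measurableC; rewrite /E; case: ifP => _; last apply: measurableC.
Qed.

Lemma cylinder_measurable l : {in l, forall p, measurable p.1} ->
  measurable (cylinder omega l).
Proof.
move=> ml; apply: fin_bigcap_measurable => [|p /= lp]; first exact: finite_seq.
exact: count_eq_measurable (ml _ lp).
Qed.

Hypothesis ppp : poisson_point_process P omega.

Local Notation d0 := ((set0 : set R), 0%N).

Lemma cylinderE l : admissible_cells l -> P (cylinder omega l) = (cylinder_prob l)%:E.
Proof.
move=> [ok disj]; have [_ pppE] := ppp.
have -> : cylinder omega l = \bigcap_(j in [set j | (j < size l)%N])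
    [set w | count_eq omega w (nth d0 l j).1 (nth d0 l j).2].
  apply/seteqP; split => w /= cyl.
    by move=> j jl; apply: cyl; rewrite /= mem_nth.
  by move=> p /= lp; rewrite -(nth_index d0 lp); apply: cyl; rewrite /= index_mem.
rewrite pppE.
- by rewrite /cylinder_prob (big_nth d0) big_mkord -prodEFin.
- by move=> j jl; apply: ok; rewrite mem_nth.
move=> j j' jl j'l jj'; apply/disj_set2P.
have [lt | gt | eq] := ltngtP j j'; last by [].
- exact: (pairwiseP d0 disj).
- by rewrite disj_set_sym; exact: (pairwiseP d0 disj).
Qed.

End CylinderProbability.

Section NoPattern.
Context {R : realType} {d : measure_display} {T : measurableType d}.
Variables (P : probability T R) (omega : T -> int -> R).
Hypothesis omega_meas : forall i, measurable_fun setT (fun w => omega w i).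

Definition no_pattern (K : nat) (js : seq nat) : set T :=
  \bigcap_(j in [set` js]) ~` cylinder omega (pattern_cells j K).

Lemma no_pattern_cons K j js :
  no_pattern K (j :: js) = ~` cylinder omega (pattern_cells j K) `&` no_pattern K js.
Proof. by rewrite /no_pattern !bigcap_seq big_cons. Qed.

Lemma pattern_event_measurable j K : measurable (cylinder omega (pattern_cells j K)).
Proof.
apply: cylinder_measurable => // p lp.
by have [] := (pattern_cells_admissible j K).1 p lp.
Qed.

Lemma no_pattern_measurable K js : measurable (no_pattern K js).
Proof.
apply: fin_bigcap_measurable => [|j _]; first exact: finite_seq.
exact/measurableC/pattern_event_measurable.
Qed.

Hypothesis ppp : poisson_point_process P omega.

Lemma prob_cylinder_no_pattern {K js} : pairwise (apart K) js -> forall G, admissible_cells G ->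
  {in G, forall p, {in js, forall j, [disjoint p.1 & pattern_region j K]%classic}} ->
  P (cylinder omega G `&` no_pattern K js) =
  (cylinder_prob G * (1 - pattern_prob K) ^+ size js)%:E.
Proof.
elim: js => [_ G G_adm _ | j js IH].
  by rewrite /no_pattern set_nil bigcap_set0 setIT cylinderE // expr0 mulr1.
rewrite pairwise_cons => /andP[/allP j_sep js_sep] G G_adm G_far.
have G_far_j : {in G, forall p, [disjoint p.1 & pattern_region j K]%classic}.
  by move=> p pG; apply: G_far; rewrite ?mem_head.
have G_far_js : {in G, forall p, {in js, forall j', [disjoint p.1 & pattern_region j' K]%classic}}.
  by move=> p pG j' j'js; apply: G_far; rewrite // inE j'js orbT.
have jG_adm : admissible_cells (pattern_cells j K ++ G).
  exact: admissible_pattern_cells_cat G_adm G_far_j.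
have jG_far : {in pattern_cells j K ++ G, forall p,
    {in js, forall j', [disjoint p.1 & pattern_region j' K]%classic}}.
  move=> p; rewrite mem_cat => /orP[pj | /G_far_js //].
  exact: pattern_cells_far j K js j_sep p pj.
set C := cylinder omega (pattern_cells j K); set N := no_pattern K js.
have mGN : measurable (cylinder omega G `&` N).
  apply: measurableI; last exact: no_pattern_measurable.
  by apply: cylinder_measurable => // p pG; have [] := G_adm.1 p pG.
rewrite no_pattern_cons -/C -/N setIA (setIC _ (~` C)) -setIA setIC -setDE.
have mC : measurable C by exact: pattern_event_measurable.
have finGN : (P (cylinder omega G `&` N) < +oo)%E.
  exact: le_lt_trans (probability_le1 P mGN) (ltry 1).
(* Remove the pattern at j by subtraction: the intersection with C is again a
   cylinder, with the cells of the pattern at j added to G. *)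
have -> : P (cylinder omega G `&` N `\` C) =
    (P (cylinder omega G `&` N) - P (cylinder omega (pattern_cells j K ++ G) `&` N))%E.
  by rewrite measureD // cylinder_cat -/C; congr (_ - P _)%E; rewrite setIC setIA.
rewrite /N (IH js_sep G G_adm G_far_js) (IH js_sep _ jG_adm jG_far) cylinder_prob_cat.
rewrite pattern_cells_prob -EFinB.
by congr EFin; rewrite exprS; ring.
Qed.

Definition windows (m : nat) : seq nat :=
  [seq m + window_spacing m * t | t <- iota 0 (window_count m)].

Lemma windows_apart m : pairwise (apart (pattern_size m)) (windows m).
Proof.
rewrite pairwise_map; apply: (@sub_pairwise _ ltn).
  by move=> t t' tt'; apply/orP; left; rewrite /window_spacing in tt' *; nia.
by rewrite -sorted_pairwise ?iota_ltn_sorted //; exact: ltn_trans.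
Qed.

Lemma mem_windows m j : j \in windows m -> (m <= j < 2 * m)%N.
Proof.
case/mapP => t; rewrite mem_iota add0n => /andP[_ tM] ->.
have D_gt0 : (0 < window_spacing m)%N by rewrite /window_spacing addn_gt0 orbT.
by move: tM; rewrite /window_count leq_divRL //; nia.
Qed.

Definition no_window_pattern (m : nat) : set T := no_pattern (pattern_size m) (windows m).

Lemma no_window_pattern_prob m :
  P (no_window_pattern m) = ((1 - pattern_prob (pattern_size m)) ^+ window_count m)%:E.
Proof.
have := prob_cylinder_no_pattern (windows_apart m) [::].
rewrite /cylinder set_nil bigcap_set0 setTI /cylinder_prob big_nil mul1r size_map size_iota.
by apply => //; split.
Qed.

Lemma lim_sup_no_window_pattern : P (lim_sup_set no_window_pattern) = 0%E.
Proof.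
apply: lim_sup_set_cvg0 => [m | ]; first exact: no_pattern_measurable.
apply: le_lt_trans (@nneseries_inv_sqr_lty R (2 ^+ 87) _) => //.
apply: lee_nneseries => [m _ _ | m _]; first exact: measure_ge0.
change (P (no_window_pattern m) <= (2 ^+ 87 / m.+1%:R ^+ 2)%:E)%E.
by rewrite no_window_pattern_prob lee_fin windows_fail_prob_le.
Qed.

Lemma eventually_window_pattern w : ~ lim_sup_set no_window_pattern w ->
  exists N, forall m, (N <= m)%N ->
    exists2 j, (m <= j < 2 * m)%N & pattern (omega w) j (pattern_size m).
Proof.
move=> /existsNP[N /not_implyP[_ notF]]; exists N => m Nm.
have /existsNP[j /not_implyP[jw /contrapT cyl]] : ~ no_window_pattern m w.
  by move=> Fm; apply: notF; exists m.
by exists j; [exact: mem_windows | exact: cylinder_pattern].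
Qed.

End NoPattern.

Theorem lemma5p3 (R : realType) (d : measure_display) (T : measurableType d)
  (P : probability T R) (ei es : R) (chi : R -> R) (omega : T -> int -> R) :
  0 < ei -> ei < es -> 2 < es / ei ->
  {within `[0, +oo[, continuous chi} ->
  (forall x, 0 <= x -> 0 <= chi x <= 1) ->
  (forall x y, 0 <= x -> x <= y -> chi y <= chi x) ->
  (forall x, 0 <= x -> x <= 1 -> chi x = 1) ->
  (forall x, 2 <= x -> chi x = 0) ->
  poisson_point_process P omega ->
  exists c0 : R, 0 < c0 /\
    {ae P, forall w, exists xs : nat -> R,
      (forall n m, (n < m)%N -> xs n < xs m) /\
      xs @ \oo --> +oo /\
      (forall n : nat, (0 < n)%N ->
         (forall x, xs n - 2 * c0 * ln n%:R <= x <= xs n ->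
            xi ei es chi omega w x = ei) /\
         (forall x, xs n + 2 <= x <= xs n + 2 * c0 * ln n%:R - 2 ->
            xi ei es chi omega w x = es) /\
         (forall x y, xs n - 2 * c0 * ln n%:R <= x -> x <= y ->
            y <= xs n + 2 * c0 * ln n%:R - 2 ->
            xi ei es chi omega w x <= xi ei es chi omega w y)) /\
      (1%:E <= limn_einf (fun n => (xs n / n%:R)%:E))%E /\
      (limn_einf (fun n => (xs n / n%:R)%:E) <=
         limn_esup (fun n => (xs n / n%:R)%:E))%E /\
      (limn_esup (fun n => (xs n / n%:R)%:E) <= 2%:E)%E}.
Proof.
move=> _ ei_lt_es _ _ chi_ge0_le1 chi_nonincr chi_eq1 chi_eq0 ppp.
have omega_meas := ppp.1.
exists (32 * ln 2)^-1; split; first by rewrite invr_gt0 mulr_gt0 // ln_gt0 // ltr1n.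
exists (lim_sup_set (no_window_pattern omega)); split.
- apply: bigcapT_measurable => n; apply: bigcup_measurable => m _.
  exact: no_pattern_measurable.
- exact: lim_sup_no_window_pattern.
- move=> w /= no_seq; apply: contrapT => /eventually_window_pattern[N win].
  by apply: no_seq; exact: pattern_sequence win.
Qed.
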